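(* Let $\mathcal{S}$ be a semifilter. Then $\mathbb{Q}\times\mathcal{S}$ is homeomorphic to a semifilter.
   Context: $\mathbb{Q}$ denotes the space of rationals. A semifilter (on $\omega$) is a collection $\mathcal{S}\subseteq\mathcal{P}(\omega)$ such that $\varnothing\notin\mathcal{S}$, $\omega\in\mathcal{S}$, $\mathcal{S}$ is closed under finite modifications (if $x\in\mathcal{S}$ and $y\subseteq\omega$ with $(x\setminus y)\cup(y\setminus x)$ finite then $y\in\mathcal{S}$), and $\mathcal{S}$ is upward-closed. Subsets of $\mathcal{P}(\omega)$ are identified via characteristic functions with subspaces of $2^\omega$. *)

(* rationals are mathcomp's [rat]; subsets of P(omega) are
   predicates on the Cantor space [nat -> bool] (characteristic functions). *)
From HB Require Import structures.
From mathcomp Require Import all_boot all_order all_algebra.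
Set Implicit Arguments. Unset Strict Implicit. Unset Printing Implicit Defensive.
Import Order.TTheory GRing.Theory Num.Theory.

Definition cantor := nat -> bool.

Definition agree (x y : cantor) (m : nat) : Prop :=
  forall i : nat, (i < m)%N -> x i = y i.

Definition omega_family := cantor -> Prop.

Definition semifilter (S : omega_family) : Prop :=
  [/\ ~ S (fun _ => false),
      S (fun _ => true),
      (forall x y : cantor, S x ->
          (exists N : nat, forall n : nat, (N <= n)%N -> x n = y n) -> S y)
    & (forall x y : cantor, S x -> (forall n : nat, x n -> y n) -> S y)].

Definition QxS (S : omega_family) (p : rat * cantor) : Prop := S p.2.

Definition cont_on_Qc (A : rat * cantor -> Prop) (h : rat * cantor -> cantor) :=
  forall p : rat * cantor, A p -> forall n : nat,
    exists (delta : rat) (m : nat), (0 < delta)%R /\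
      forall p' : rat * cantor, A p' ->
        (`|p'.1 - p.1| < delta)%R -> agree p'.2 p.2 m -> agree (h p') (h p) n.

Definition cont_on_cQ (B : cantor -> Prop) (g : cantor -> rat * cantor) :=
  forall y : cantor, B y -> forall (eps : rat) (n : nat), (0 < eps)%R ->
    exists m : nat, forall y' : cantor, B y' -> agree y' y m ->
      (`|(g y').1 - (g y).1| < eps)%R /\ agree (g y').2 (g y).2 n.

Definition homeomorphic_Qc (A : rat * cantor -> Prop) (B : cantor -> Prop) :=
  exists (h : rat * cantor -> cantor) (g : cantor -> rat * cantor),
    (forall p, A p -> B (h p)) /\
    (forall y, B y -> A (g y)) /\
    (forall p, A p -> g (h p) = p) /\
    (forall y, B y -> h (g y) = y) /\
    cont_on_Qc A h /\
    cont_on_cQ B g.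

From HB Require Import structures.
From mathcomp Require Import all_boot all_order all_algebra.
From mathcomp Require Import zify ring lra.
From Stdlib Require Import Classical ClassicalEpsilon FunctionalExtensionality.

Set Implicit Arguments. Unset Strict Implicit. Unset Printing Implicit Defensive.
Import Order.TTheory GRing.Theory Num.Theory.
Local Open Scope ring_scope.

(* Q is homeomorphic to the space of cofinite subsets of omega. Balls of
   irrational radius sqrt 2 / 2 ^ k are clopen in Q, so a rational r can be
   coded bit by bit: starting from Q, take the rational c of least index in the
   current open set and the largest such ball around c inside it; bit 1 means r
   lies in the next smaller ball around c, bit 0 that r lies in the annulus in
   between, which becomes the new open set. Each 0 strictly increases the index
   of c, which never exceeds the index of r, so the code of r is cofinite; the
   balls around the final centre shrink to it, so that centre is r. Interleaving
   this code with the coordinates of S maps Q x S onto the set of y whose even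
   part is cofinite and whose odd part lies in S, a semifilter. *)

Lemma sqr_rat_neq2 (y : rat) : y ^+ 2 != 2.
Proof.
apply/negP => /eqP y2.
have E := numqE y; set n := numq y in E; set d := denq y in E.
have nd : n ^+ 2 = 2 * d ^+ 2.
  apply/eqP; rewrite -(eqr_int rat) rmorphXn rmorphM /= E exprMn y2.
  by rewrite rmorphXn.
have nd_abs : (`|n| ^ 2 = 2 * `|d| ^ 2)%N.
  by have := congr1 absz nd; rewrite abszM !abszX.
have /dvdnP[c nc] : (2 %| `|n|)%N.
  by have := @Euclid_dvdX `|n| 2 2 isT; rewrite nd_abs dvdn_mulr // => /esym/andP[].
have dc : (`|d| ^ 2 = 2 * c ^ 2)%N by move: nd_abs; rewrite nc; lia.
have d2 : (2 %| `|d|)%N.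
  by have := @Euclid_dvdX `|d| 2 2 isT; rewrite dc dvdn_mulr // => /esym/andP[].
have := coprime_num_den y; rewrite /coprime => /eqP cop.
have : (2 %| gcdn `|numq y| `|denq y|)%N by rewrite dvdn_gcd nc dvdn_mull // d2.
by rewrite cop.
Qed.

Lemma exp4_sqr (k : nat) : (4 : rat) ^+ k = (2 ^+ k) ^+ 2.
Proof. by rewrite -exprM mulnC exprM expr2 -[4 in LHS]/(2 * 2 : rat). Qed.

Lemma archi_exp2 (e : rat) : 0 < e -> exists k : nat, 2 < e * 2 ^+ k.
Proof.
move=> e_gt0; have /archi_boundP : 0 <= 2 / e by rewrite divr_ge0 // ltW.
set n := Num.bound _ => n_gt; exists n.
have : (n%:R : rat) < 2 ^+ n by rewrite -natrX ltr_nat ltn_expl.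
by move/(lt_trans n_gt); rewrite ltr_pdivrMr // mulrC.
Qed.

(* A ball of the irrational radius sqrt 2 / 2 ^ k: it is clopen in Q. *)
Definition qball (q : rat) (k : nat) (r : rat) : Prop := (r - q) ^+ 2 * 4 ^+ k < 2.

Lemma qball_center q k : qball q k q.
Proof. by rewrite /qball subrr expr0n /= mul0r. Qed.

Lemma qball_le q k k' r : (k <= k')%N -> qball q k' r -> qball q k r.
Proof.
rewrite /qball => le_kk'; apply: le_lt_trans.
by apply: ler_wpM2l; [rewrite sqr_ge0 | rewrite ler_eXn2l].
Qed.

Lemma qball_dist q k r : qball q k r -> `|r - q| * 2 ^+ k < 2.
Proof.
have e_gt0 : (0 : rat) < 2 ^+ k by rewrite exprn_gt0.
rewrite /qball exp4_sqr -exprMn -real_normK ?num_real // normrM (gtr0_norm e_gt0).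
have : 0 <= `|r - q| * 2 ^+ k by rewrite mulr_ge0 // ltW.
nra.
Qed.

Lemma qball_annulus q k : qball q k (q + (2 ^+ k)^-1) /\ ~ qball q k.+1 (q + (2 ^+ k)^-1).
Proof.
rewrite /qball addrAC subrr add0r.
have : ((2 ^+ k)^-1) ^+ 2 * (4 : rat) ^+ k = 1.
  by rewrite exp4_sqr exprVn mulVf // !expf_neq0.
by rewrite [(4 : rat) ^+ k.+1]exprS mulrCA => ->; rewrite mulr1; split; lra.
Qed.

Lemma qball_eq q r : (forall k, qball q k r) -> r = q.
Proof.
move=> r_in; apply/eqP; rewrite -subr_eq0; apply: contraT => rq_neq0.
have [k] : exists k, 2 < `|r - q| * 2 ^+ k by apply: archi_exp2; rewrite normr_gt0.
by have := qball_dist (r_in k); lra.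
Qed.

Definition open_rat (C : rat -> Prop) :=
  forall r, C r -> exists2 d : rat, 0 < d & forall r', `|r' - r| < d -> C r'.

Lemma open_rat_true : open_rat (fun _ => True).
Proof. by move=> r _; exists 1. Qed.

Lemma open_ratI (A B : rat -> Prop) :
  open_rat A -> open_rat B -> open_rat (fun r => A r /\ B r).
Proof.
move=> oA oB r [/oA[d1 d1_gt0 A_d1] /oB[d2 d2_gt0 B_d2]].
exists (Num.min d1 d2); first by rewrite lt_min d1_gt0 d2_gt0.
by move=> r'; rewrite lt_min => /andP[/A_d1 ? /B_d2 ?].
Qed.

Lemma continuous_sqr_dist (q r c g : rat) : 0 < c -> 0 < g ->
  exists2 d : rat, 0 < d & forall r', `|r' - r| < d ->
    `|(r' - q) ^+ 2 * c - (r - q) ^+ 2 * c| < g.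
Proof.
move=> c_gt0 g_gt0; have A_ge0 : 0 <= `|r - q| by rewrite normr_ge0.
have den_gt0 : 0 < c * (2 * `|r - q| + 1) + g by nra.
pose d := g / (c * (2 * `|r - q| + 1) + g).
have dE : d * (c * (2 * `|r - q| + 1) + g) = g by rewrite /d mulfVK // gt_eqF.
exists d => [|r' r'_near]; first by rewrite divr_gt0.
have -> : (r' - q) ^+ 2 * c - (r - q) ^+ 2 * c
          = c * ((r' - r) * (2 * (r - q) + (r' - r))) by ring.
rewrite normrM (gtr0_norm c_gt0) normrM.
have : `|2 * (r - q) + (r' - r)| <= 2 * `|r - q| + 1.
  apply: le_trans (ler_normD _ _) _; rewrite normrM ger0_norm //.
  have : d <= 1 by nra.
  lra.
move=> /(ler_wpM2l (normr_ge0 (r' - r))) P_le.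
have : `|r' - r| * (2 * `|r - q| + 1) < d * (2 * `|r - q| + 1).
  by rewrite ltr_pM2r //; lra.
have : 0 <= d by rewrite divr_ge0 // ltW.
nra.
Qed.

Lemma open_qball q k : open_rat (qball q k).
Proof.
move=> r r_in; have c_gt0 : (0 : rat) < 4 ^+ k by rewrite exprn_gt0.
have g_gt0 : 0 < 2 - (r - q) ^+ 2 * 4 ^+ k by rewrite subr_gt0.
have [d d_gt0 near] := continuous_sqr_dist q r c_gt0 g_gt0.
by exists d => // r' /near; rewrite /qball ltr_norml; lra.
Qed.

Lemma open_qballN q k : open_rat (fun r => ~ qball q k r).
Proof.
move=> r r_out; have c_gt0 : (0 : rat) < 4 ^+ k by rewrite exprn_gt0.
have neq2 : (r - q) ^+ 2 * 4 ^+ k != 2 by rewrite exp4_sqr -exprMn sqr_rat_neq2.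
have g_gt0 : 0 < (r - q) ^+ 2 * 4 ^+ k - 2.
  by rewrite subr_gt0 lt_neqAle eq_sym neq2 leNgt; apply/negP.
have [d d_gt0 near] := continuous_sqr_dist q r c_gt0 g_gt0.
by exists d => // r' /near; rewrite /qball ltr_norml; lra.
Qed.

Lemma open_rat_qball (C : rat -> Prop) q :
  open_rat C -> C q -> exists k, forall r, qball q k r -> C r.
Proof.
move=> oC /oC[d d_gt0 C_d]; have [k k_large] := archi_exp2 d_gt0.
exists k => r /qball_dist r_near; apply: C_d.
by rewrite -(ltr_pM2r (exprn_gt0 k (ltr0Sn _ 1))); lra.
Qed.

Lemma exists_pickle_min (C : rat -> Prop) r : C r ->
  exists q, C q /\ forall r', C r' -> (pickle q <= pickle r')%N.
Proof.
move=> r_in; move En: (pickle r) => n; elim/ltn_ind: n r En r_in => n IH r rn r_in; subst n.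
have [[r' [r'_in r'_lt]] | no_smaller] :=
  classic (exists r', C r' /\ (pickle r' < pickle r)%N).
  exact: IH r'_lt r' erefl r'_in.
exists r; split=> // r' r'_in; rewrite leqNgt; apply/negP => r'_lt.
by apply: no_smaller; exists r'.
Qed.

Definition center (C : rat -> Prop) : rat :=
  epsilon (inhabits 0) (fun q => C q /\ forall r, C r -> (pickle q <= pickle r)%N).

Lemma centerP (C : rat -> Prop) r : C r ->
  C (center C) /\ forall r', C r' -> (pickle (center C) <= pickle r')%N.
Proof. by move=> /exists_pickle_min; apply: epsilon_spec. Qed.

Definition radius (C : rat -> Prop) : nat :=
  epsilon (inhabits 0%N) (fun k => forall r, qball (center C) k r -> C r).

(* A node of the coding tree: its [region] is [base] at depth 0, and then a
   ball around the centre of [base] which shrinks as the depth grows. A 0-child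
   cuts off the annulus between two consecutive balls as a new base. *)
Record node := Node { base : rat -> Prop; depth : nat }.

Definition region (v : node) : rat -> Prop :=
  if depth v is 0 then base v
  else qball (center (base v)) (radius (base v) + depth v).

Definition child (v : node) (b : bool) : node :=
  if b then Node (base v) (depth v).+1
  else Node (fun r => region v r /\
                      ~ qball (center (base v)) (radius (base v) + (depth v).+1) r) 0.

Definition valid (v : node) : Prop := open_rat (base v) /\ exists r, base v r.

Lemma region_child_cover v r :
  region v r -> region (child v true) r \/ region (child v false) r.
Proof. by move=> r_in; case: (classic (region (child v true) r)); [left | right]. Qed.

Lemma region_child_disjoint v r : region (child v true) r -> ~ region (child v false) r.
Proof. by move=> r_in [_]. Qed.

Section ValidNode.

Variable v : node.
Hypothesis v_valid : valid v.

Lemma center_base :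
  base v (center (base v)) /\ forall r, base v r -> (pickle (center (base v)) <= pickle r)%N.
Proof. by case: v_valid => _ [r /centerP]. Qed.

Lemma qball_radius r : qball (center (base v)) (radius (base v)) r -> base v r.
Proof.
apply: (epsilon_spec _ _ (open_rat_qball _ _)); first by case: v_valid.
exact: center_base.1.
Qed.

Lemma region_base r : region v r -> base v r.
Proof.
rewrite /region; case: (depth v) => // n r_in; apply: qball_radius.
by apply: qball_le r_in; rewrite leq_addr.
Qed.

Lemma region_center : region v (center (base v)).
Proof. by rewrite /region; case: (depth v) => [|n]; [exact: center_base.1 | exact: qball_center]. Qed.

Lemma open_region : open_rat (region v).
Proof. by rewrite /region; case: (depth v) => [|n]; [case: v_valid | exact: open_qball]. Qed.

Lemma region_child b r : region (child v b) r -> region v r.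
Proof.
case: b => [|[] //]; rewrite /region /child /=; case: (depth v) => [|n] r_in.
  by apply: qball_radius; apply: qball_le r_in; rewrite leq_addr.
by apply: qball_le r_in; rewrite leq_add2l.
Qed.

Lemma valid_child b : valid (child v b).
Proof.
case: b => //; rewrite /valid /=; split; first by apply: open_ratI; [exact: open_region | exact: open_qballN].
have [w_in w_out] := qball_annulus (center (base v)) (radius (base v) + depth v).
exists (center (base v) + (2 ^+ (radius (base v) + depth v))^-1); split; last by rewrite addnS.
rewrite /region; case E: (depth v) => [|n]; last by rewrite -E.
by apply: qball_radius; move: w_in; rewrite E addn0.
Qed.

(* The new centre lies in [base v] but outside the ball around the old one. *)
Lemma center_child_false :
  (pickle (center (base v)) < pickle (center (base (child v false))))%N.
Proof.
have [_ [r /centerP[[c_in c_out] _]]] := valid_child false.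
rewrite ltn_neqAle (center_base.2 _ (region_base c_in)) andbT.
apply/negP => /eqP /(pcan_inj pickleK) E.
by apply: c_out; rewrite -E; apply: qball_center.
Qed.

End ValidNode.

Definition root : node := Node (fun _ => True) 0.

Lemma valid_root : valid root.
Proof. by split; [exact: open_rat_true | exists 0]. Qed.

Fixpoint node_at (z : cantor) (i : nat) : node :=
  if i is i'.+1 then child (node_at z i') (z i') else root.

Lemma valid_node_at z i : valid (node_at z i).
Proof. by elim: i => [|i IH] /=; [exact: valid_root | exact: valid_child]. Qed.

Lemma node_at_agree z z' i : agree z z' i -> node_at z i = node_at z' i.
Proof. by elim: i => [//|i IH] zz' /=; rewrite IH ?zz' // => j /ltnW /zz'. Qed.

Lemma region_node_at_le z i j r :
  (i <= j)%N -> region (node_at z j) r -> region (node_at z i) r.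
Proof.
move: i j; apply: (@homo_leq _ (node_at z) (fun v w => region w r -> region v r)).
- by [].
- by move=> w u x uw xu /xu /uw.
- by move=> i; exact: (region_child (valid_node_at z i)).
Qed.

Definition branch (v : node) (r : rat) : bool :=
  if excluded_middle_informative (region (child v true) r) then true else false.

Lemma branch_true v r : region (child v true) r -> branch v r = true.
Proof. by rewrite /branch; case: excluded_middle_informative. Qed.

Lemma branch_false v r : region (child v false) r -> branch v r = false.
Proof.
rewrite /branch; case: excluded_middle_informative => // r_in r_in'.
by case: (region_child_disjoint r_in r_in').
Qed.

Fixpoint code_node (r : rat) (i : nat) : node :=
  if i is i'.+1 then child (code_node r i') (branch (code_node r i') r) else root.

Definition code (r : rat) : cantor := fun i => branch (code_node r i) r.

Lemma code_nodeE r i : code_node r i = node_at (code r) i.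
Proof. by elim: i => [//|i IH] /=; rewrite -IH. Qed.

Lemma region_code r i : region (node_at (code r) i) r.
Proof.
elim: i => [//|i IH] /=; rewrite /code -code_nodeE; rewrite -code_nodeE in IH.
by case: (region_child_cover IH) => r_in;
  [rewrite (branch_true r_in) | rewrite (branch_false r_in)].
Qed.

Lemma agree_code z r i : region (node_at z i) r -> agree (code r) z i.
Proof.
elim: i => [|i IH] r_in j; first by [].
have agree_i := IH (region_child (valid_node_at z i) r_in).
rewrite ltnS leq_eqVlt => /orP[/eqP -> | /agree_i //].
rewrite /code code_nodeE (node_at_agree agree_i).
by move: r_in => /=; case: (z i) => r_in; [exact: branch_true | exact: branch_false].
Qed.

Definition cofinite : omega_family :=
  fun z => exists N, forall n, (N <= n)%N -> z n = true.

Lemma cofinite_bounded_increase (z : cantor) (P : nat -> nat) (B : nat) :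
  (forall i, P i <= P i.+1)%N -> (forall i, z i = false -> P i < P i.+1)%N ->
  (forall i, P i <= B)%N -> cofinite z.
Proof.
move=> P_incr P_zero P_bound; apply: NNPP => z_cof.
have P_le : {homo P : i j / i <= j}%N by apply: homo_leq => //; exact: leq_trans.
have P_unbounded c : exists i, (c <= P i)%N.
  elim: c => [|c [i c_le]]; first by exists 0%N.
  have [n [i_le zn]] : exists n, (i <= n)%N /\ z n = false.
    apply: NNPP => no_zero; apply: z_cof; exists i => n i_le; apply: NNPP => zn.
    by apply: no_zero; exists n; split=> //; move: zn; case: (z n).
  by exists n.+1; apply: leq_ltn_trans (P_zero n zn); exact: leq_trans c_le (P_le _ _ i_le).
by have [i] := P_unbounded B.+1; rewrite ltnNge P_bound.
Qed.

Lemma cofinite_code r : cofinite (code r).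
Proof.
pose z := code r; pose P i := pickle (center (base (node_at z i))).
have P_incr i : (P i <= P i.+1)%N /\ (z i = false -> P i < P i.+1)%N.
  rewrite /P /=; case: (z i) => /=; first by split.
  by have := center_child_false (valid_node_at z i); split=> //; apply: ltnW.
apply: (@cofinite_bounded_increase z P (pickle r)) => [i | i | i].
- exact: (P_incr i).1.
- exact: (P_incr i).2.
- apply: (center_base (valid_node_at z i)).2.
  exact: (region_base (valid_node_at z i) (region_code r i)).
Qed.

Lemma node_at_tail z N : (forall n, (N <= n)%N -> z n = true) ->
  forall j, node_at z (N + j) = Node (base (node_at z N)) (depth (node_at z N) + j).
Proof.
move=> z_tail; elim=> [|j IH]; first by rewrite !addn0; case: (node_at z N).
by rewrite addnS /= IH z_tail ?leq_addr //= addnS.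
Qed.

Definition decode (z : cantor) : rat :=
  center (base (node_at z (epsilon (inhabits 0%N)
                             (fun N => forall n, (N <= n)%N -> z n = true)))).

Lemma decodeE z N : (forall n, (N <= n)%N -> z n = true) ->
  decode z = center (base (node_at z N)).
Proof.
have base_tail M M' : (forall n, (M <= n)%N -> z n = true) -> (M <= M')%N ->
    base (node_at z M') = base (node_at z M).
  by move=> z_tail /subnKC <-; rewrite node_at_tail.
move=> z_tail; rewrite /decode; set M := epsilon _ _.
have M_tail : forall n, (M <= n)%N -> z n = true.
  by apply: (epsilon_spec (inhabits 0%N) (fun M => forall n, (M <= n)%N -> z n = true)); exists N.
by rewrite -(base_tail M (maxn M N)) ?leq_maxl // (base_tail N) ?leq_maxr.
Qed.

Lemma region_decode z : cofinite z -> forall i, region (node_at z i) (decode z).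
Proof.
move=> [N z_tail] i; have z_tail' n : (maxn i N <= n)%N -> z n = true.
  by rewrite geq_max => /andP[_]; exact: z_tail.
apply: (region_node_at_le (leq_maxl i N)).
by rewrite (decodeE z_tail'); apply: region_center (valid_node_at _ _).
Qed.

Lemma code_decode z : cofinite z -> code (decode z) = z.
Proof.
move=> z_cof; apply: functional_extensionality => i.
exact: (agree_code (region_decode z_cof i.+1)).
Qed.

Lemma decode_code r : decode (code r) = r.
Proof.
have [N z_tail] := cofinite_code r; rewrite (decodeE z_tail); apply/esym/qball_eq => k.
have := region_code r (N + k.+1); rewrite node_at_tail // /region /= addnS.
by apply: qball_le; lia.
Qed.

Lemma code_continuous r n :
  exists2 d : rat, 0 < d & forall r', `|r' - r| < d -> agree (code r') (code r) n.
Proof.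
have [d d_gt0 near] := open_region (valid_node_at (code r) n) (region_code r n).
by exists d => // r' /near /agree_code.
Qed.

Lemma decode_continuous z (eps : rat) : cofinite z -> 0 < eps ->
  exists m, forall z', cofinite z' -> agree z' z m -> `|decode z' - decode z| < eps.
Proof.
move=> [N z_tail] eps_gt0; have [k k_large] := archi_exp2 eps_gt0.
exists (N + k.+1)%N => z' z'_cof zz'.
have := region_decode z'_cof (N + k.+1).
rewrite (node_at_agree zz') node_at_tail // /region /= addnS (decodeE z_tail) => near.
have /qball_dist : qball (center (base (node_at z N))) k (decode z').
  by apply: qball_le near; lia.
have two_k_gt0 : (0 : rat) < 2 ^+ k by rewrite exprn_gt0.
by move=> dist; rewrite -(ltr_pM2r two_k_gt0); lra.
Qed.

Definition evens (y : cantor) : cantor := fun n => y n.*2.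
Definition odds (y : cantor) : cantor := fun n => y n.*2.+1.
Definition interleave (x y : cantor) : cantor :=
  fun i => if odd i then y i./2 else x i./2.

Lemma evens_interleave x y : evens (interleave x y) = x.
Proof.
by apply: functional_extensionality => n; rewrite /evens /interleave odd_double half_double.
Qed.

Lemma odds_interleave x y : odds (interleave x y) = y.
Proof.
apply: functional_extensionality => n.
by rewrite /odds /interleave /= odd_double /= uphalf_double.
Qed.

Lemma interleave_evens_odds y : interleave (evens y) (odds y) = y.
Proof.
apply: functional_extensionality => i; rewrite /interleave /evens /odds.
by have := odd_double_half i; case: (odd i) => /= i_eq; rewrite -[in RHS]i_eq.
Qed.

Lemma agree_le (x y : cantor) m n : (m <= n)%N -> agree x y n -> agree x y m.
Proof. by move=> le_mn xy i /leq_trans/(_ le_mn)/xy. Qed.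

Lemma agree_interleave x x' y y' n : agree x x' n -> agree y y' n ->
  agree (interleave x y) (interleave x' y') n.
Proof.
move=> xx' yy' i i_lt; have half_lt : (i./2 < n)%N.
  by apply: leq_ltn_trans i_lt; rewrite -{2}(odd_double_half i) -addnn addnA leq_addl.
by rewrite /interleave; case: (odd i); [exact: yy' | exact: xx'].
Qed.

Lemma agree_evens y y' n : agree y y' n.*2 -> agree (evens y) (evens y') n.
Proof. by move=> yy' i i_lt; apply: yy'; rewrite ltn_double. Qed.

Lemma agree_odds y y' n : agree y y' n.*2 -> agree (odds y) (odds y') n.
Proof. by move=> yy' i i_lt; apply: yy'; rewrite -doubleS leq_double. Qed.

Definition semifilter_prod (S1 S2 : omega_family) : omega_family :=
  fun y => S1 (evens y) /\ S2 (odds y).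

Lemma semifilter_cofinite : semifilter cofinite.
Proof.
split.
- by case=> N /(_ N (leqnn N)).
- by exists 0%N.
- move=> x y [N x_tail] [M xy_tail]; exists (maxn N M) => n.
  by rewrite geq_max => /andP[/x_tail <- /xy_tail ->].
- by move=> x y [N x_tail] xy; exists N => n /x_tail /xy.
Qed.

Lemma semifilter_prod_semifilter S1 S2 :
  semifilter S1 -> semifilter S2 -> semifilter (semifilter_prod S1 S2).
Proof.
case=> _ S1_full S1_fin S1_up [S2_empty S2_full S2_fin S2_up]; split.
- by case.
- by [].
- move=> x y [x1 x2] [N xy_tail]; split.
    apply: (S1_fin _ _ x1); exists N => n N_le; apply: xy_tail.
    by rewrite -addnn (leq_trans N_le) ?leq_addl.
  apply: (S2_fin _ _ x2); exists N => n N_le; apply: xy_tail.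
  by rewrite -addnn (leq_trans N_le) // leqW ?leq_addl.
- by move=> x y [x1 x2] xy; split; [apply: (S1_up _ _ x1) | apply: (S2_up _ _ x2)] => n /xy.
Qed.

Lemma homeomorphic_QxS_prod S :
  homeomorphic_Qc (QxS S) (semifilter_prod cofinite S).
Proof.
exists (fun p => interleave (code p.1) p.2), (fun y => (decode (evens y), odds y)).
split; [|split; [|split; [|split; [|split]]]].
- move=> [r x] x_in; rewrite /semifilter_prod evens_interleave odds_interleave.
  by split; [exact: cofinite_code | exact: x_in].
- by move=> y [].
- by move=> [r x] _; rewrite evens_interleave odds_interleave decode_code.
- by move=> y [y_cof _]; rewrite code_decode // interleave_evens_odds.
- move=> [r x] _ n; have [d d_gt0 near] := code_continuous r n.
  by exists d, n; split=> // [[r' x']] _ /= /near; apply: agree_interleave.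
- move=> y [y_cof _] eps n eps_gt0.
  have [m near] := decode_continuous y_cof eps_gt0.
  exists (m + n).*2 => y' [y'_cof _] yy'; split.
    by apply: near => //; apply/agree_evens/(agree_le _ yy'); rewrite leq_double leq_addr.
  by apply/agree_odds/(agree_le _ yy'); rewrite leq_double leq_addl.
Qed.

Theorem lemma8p2 (S : omega_family) (hS : semifilter S) :
  exists T : omega_family, semifilter T /\ homeomorphic_Qc (QxS S) T.
Proof.
exists (semifilter_prod cofinite S); split.
  exact: semifilter_prod_semifilter semifilter_cofinite hS.
exact: homeomorphic_QxS_prod.
Qed.
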